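(* Let $p\ge 2$ and let $J$ be a periodic Jacobi operator on $\ell^2(\mathbb{Z})$ with period $p$, given by $(J\psi)_n=a_{n-1}\psi_{n-1}+b_n\psi_n+a_n\psi_{n+1}$, where $a_n>0$, $b_n\in\mathbb{R}$, $a_{n+p}=a_n$, $b_{n+p}=b_n$ for all $n$. Let $A:=(a_1\cdots a_p)^{1/p}$, and let $\sigma_n$ ($1\le n\le p$) and $\gamma_n$ ($1\le n\le p-1$) be the spectral bands and gaps of $J$. If $$4\min_{1\le n\le p-1}|\gamma_n|\ge\max\Big\{\max_{1\le n\le p}|\sigma_n|,\;4A\Big\},$$ then $$\min_{1\le n\le p}|\sigma_n|\le\frac{4A^p}{\big(\min_{1\le n\le p-1}|\gamma_n|\big)^{p-1}}.$$
   Context: Spectral structure: the spectrum of $J$ is $\sigma(J)=\{\lambda\in\mathbb{R}: |\Delta(\lambda)|\le 2\}$, where $\Delta(\lambda)=\operatorname{tr}\big(A_p(\lambda)A_{p-1}(\lambda)\cdots A_1(\lambda)\big)$ with $A_n(\lambda)=\begin{pmatrix}(\lambda-b_n)/a_n & -a_{n-1}/a_n\\ 1&0\end{pmatrix}$ (the discriminant, a real polynomial of degree $p$). It is a standard fact that this set is a union of $p$ closed intervals (bands) $\sigma_n=[\lambda_n^{\min},\lambda_n^{\max}]$, $1\le n\le p$, with $\lambda_n^{\min}<\lambda_n^{\max}\le\lambda_{n+1}^{\min}$ (bands may touch but do not overlap); on each band $\Delta$ is monotone and maps it onto $[-2,2]$. The spectral gaps are $\gamma_n=(\lambda_n^{\max},\lambda_{n+1}^{\min})$,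 $1\le n\le p-1$ (possibly empty). $|\cdot|$ denotes Lebesgue measure (length). *)

From HB Require Import structures.
From mathcomp Require Import all_boot all_order all_algebra.
From mathcomp Require Import reals exp.
Set Implicit Arguments. Unset Strict Implicit. Unset Printing Implicit Defensive.
Import Order.TTheory GRing.Theory Num.Theory.
Local Open Scope ring_scope.

Section Jacobi.
Variable R : realType.
Implicit Types (a b : int -> R) (x : R).

Definition transfer a b (n : nat) x : 'M[R]_2 :=
  \matrix_(i < 2, j < 2)
    if (i : nat) == 0%N then
      (if (j : nat) == 0%N then (x - b n%:Z) / a n%:Z
       else - (a (n%:Z - 1)) / a n%:Z)
    else (if (j : nat) == 0%N then 1 else 0).

Fixpoint monodromy a b (n : nat) x : 'M[R]_2 :=
  match n with
  | 0%N => 1%:M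
  | k.+1 => transfer a b k.+1 x *m monodromy a b k x
  end.

Definition discriminant a b (p : nat) x : R := \tr (monodromy a b p x).

Definition jacobi_spectrum a b (p : nat) (x : R) : Prop :=
  `|discriminant a b p x| <= 2.

Definition band_edges a b (p : nat) (lmin lmax : nat -> R) : Prop :=
  [/\ (forall n, (1 <= n <= p)%N -> lmin n < lmax n),
      (forall n, (1 <= n < p)%N -> lmax n <= lmin n.+1),
      (forall x, jacobi_spectrum a b p x <->
         exists2 n, (1 <= n <= p)%N & lmin n <= x <= lmax n),
      (forall n, (1 <= n <= p)%N ->
         (forall x y, lmin n <= x -> x <= y -> y <= lmax n ->
            discriminant a b p x <= discriminant a b p y) \/
         (forall x y, lmin n <= x -> x <= y -> y <= lmax n ->
            discriminant a b p y <= discriminant a b p x)) &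
      (forall n, (1 <= n <= p)%N -> forall y, -2 <= y <= 2 ->
         exists2 x, lmin n <= x <= lmax n & discriminant a b p x = y)].

(* |sigma_n| and |gamma_n| (Lebesgue measure; an empty gap has length 0) *)
Definition band_len (lmin lmax : nat -> R) (n : nat) : R := lmax n - lmin n.
Definition gap_len (lmin lmax : nat -> R) (n : nat) : R := lmin n.+1 - lmax n.

Definition min_band (p : nat) (lmin lmax : nat -> R) : R :=
  \big[Num.min/band_len lmin lmax 1]_(1 <= n < p.+1) band_len lmin lmax n.
Definition max_band (p : nat) (lmin lmax : nat -> R) : R :=
  \big[Num.max/band_len lmin lmax 1]_(1 <= n < p.+1) band_len lmin lmax n.
Definition min_gap (p : nat) (lmin lmax : nat -> R) : R :=
  \big[Num.min/gap_len lmin lmax 1]_(1 <= n < p) gap_len lmin lmax n.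

Definition geom_mean a (p : nat) : R :=
  powR (\prod_(1 <= n < p.+1) a n%:Z) (p%:R^-1).

End Jacobi.

From HB Require Import structures.
From mathcomp Require Import all_boot all_order all_algebra.
From mathcomp Require Import reals exp boolp.
From mathcomp Require Import ring lra zify.
Import Order.TTheory GRing.Theory Num.Theory.
Local Open Scope ring_scope.

(* The discriminant is a polynomial of degree p with leading coefficient
   1/(a_1 ... a_p) = A^-p.  Each band contains a point where it equals 2; these
   p points are separated by the gaps, so they are all the roots of Delta - 2.
   Evaluating Delta - 2 = A^-p prod_m (x - r_m) at the end e of the first band
   where Delta e = -2, with r_1 its other end, gives
   4 A^p = |e - r_1| prod_(m >= 2) |e - r_m| >= |sigma_1| gamma^(p-1)
   for gamma the smallest gap. *)

Lemma lead_coef_root_prod_le {R : numFieldType} (q : {poly R}) (r0 e g : R)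
    (rs : seq R) :
  size q = (size rs).+2 -> all (root q) (r0 :: rs) -> uniq (r0 :: rs) ->
  0 <= g -> (forall r, r \in rs -> g <= `|e - r|) ->
  `|lead_coef q| * `|e - r0| * g ^+ size rs <= `|q.[e]|.
Proof.
move=> sq rq urs g0 far.
have rsq : uniq_roots (r0 :: rs) by rewrite uniq_rootsE.
have sq' : size q = (size (r0 :: rs)).+1 := sq.
rewrite [q in `|q.[e]|](all_roots_prod_XsubC sq' rq rsq).
rewrite hornerZ horner_prod big_cons !normrM -mulrA hornerXsubC.
rewrite !ler_wpM2l ?normr_ge0 // normr_prod {urs rq rsq sq sq'}.
under eq_bigr do rewrite hornerXsubC.
elim: rs far => [|r rs IH] far; first by rewrite big_nil.
rewrite big_cons exprS ler_pM ?exprn_ge0 ?far ?mem_head // IH // => r' rs_r'.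
by rewrite far // inE rs_r' orbT.
Qed.

Section DiscriminantPolynomial.
Context {R : realType} (a b : int -> R).

Definition transfer_lin (k : nat) : {poly R} := (a k%:Z)^-1 *: ('X - (b k%:Z)%:P).
Definition transfer_ratio (k : nat) : R := a (k%:Z - 1) / a k%:Z.

(* [jacobi_pair s k = (s_(k-1), s_k)] for the solution of
   [s_(k+1) = transfer_lin (k+1) s_k - transfer_ratio (k+1) s_(k-1)]
   with [(s_(-1), s_0) = s]. *)
Fixpoint jacobi_pair (s : {poly R} * {poly R}) (k : nat) : {poly R} * {poly R} :=
  if k is k'.+1 then
    let: (x, y) := jacobi_pair s k' in
    (y, transfer_lin k'.+1 * y - transfer_ratio k'.+1 *: x)
  else s.

Lemma jacobi_pairS s k : jacobi_pair s k.+1 =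
  ((jacobi_pair s k).2,
   transfer_lin k.+1 * (jacobi_pair s k).2 - transfer_ratio k.+1 *: (jacobi_pair s k).1).
Proof. by rewrite /=; case: (jacobi_pair s k). Qed.

Definition first_kind k := jacobi_pair (0, 1) k.
Definition second_kind k := jacobi_pair (1, 0) k.

Lemma monodromyE k x : monodromy a b k x = \matrix_(i < 2, j < 2)
  if (i : nat) == 0%N then
    (if (j : nat) == 0%N then (first_kind k).2.[x] else (second_kind k).2.[x])
  else (if (j : nat) == 0%N then (first_kind k).1.[x] else (second_kind k).1.[x]).
Proof.
apply/matrixP => i j; elim: k i j => [|k IH] i j.
  by rewrite !mxE !hornerE; case: i => -[|[|//]] ?; case: j => -[|[|//]] ?.
rewrite /= !mxE !big_ord_recl big_ord0 !IH !mxE /first_kind /second_kind.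
rewrite !jacobi_pairS /transfer_lin /transfer_ratio !hornerE /=.
by case: i => -[|[|//]] ?; case: j => -[|[|//]] ? /=; ring.
Qed.

Definition disc_poly p := (first_kind p).2 + (second_kind p).1.

Lemma discriminantE p x : discriminant a b p x = (disc_poly p).[x].
Proof.
by rewrite /discriminant monodromyE /mxtrace !big_ord_recl big_ord0 !mxE addr0 hornerD.
Qed.

Hypothesis a_neq0 : forall n : int, a n != 0.

Lemma size_transfer_lin k : size (transfer_lin k) = 2%N.
Proof. by rewrite size_scale ?size_XsubC // invr_eq0. Qed.

Lemma lead_coef_transfer_lin k : lead_coef (transfer_lin k) = (a k%:Z)^-1.
Proof. by rewrite lead_coefZ lead_coefXsubC mulr1. Qed.

Lemma size_lead_transfer_step k c (x y : {poly R}) n :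
  (size x <= n)%N -> size y = n.+1 ->
  size (transfer_lin k * y - c *: x) = n.+2 /\
  lead_coef (transfer_lin k * y - c *: x) = (a k%:Z)^-1 * lead_coef y.
Proof.
move=> sx sy.
have sM : size (transfer_lin k * y) = n.+2.
  by rewrite size_mul ?size_transfer_lin ?sy // -size_poly_eq0 ?size_transfer_lin ?sy.
have small : (size (- (c *: x)) < size (transfer_lin k * y)%R)%N.
  by rewrite size_polyN sM ltnS (leq_trans (size_scale_leq _ _)) // (leq_trans sx).
by rewrite (size_polyDl small) (lead_coefDl small) sM lead_coefM lead_coef_transfer_lin.
Qed.

Lemma size_first_kind k :
  (size (first_kind k).1 <= k)%N /\ size (first_kind k).2 = k.+1.
Proof.
elim: k => [|k [s1 s2]]; first by rewrite /= size_poly0 size_poly1.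
rewrite /first_kind jacobi_pairS -/(first_kind k) s2.
by have [-> _] := size_lead_transfer_step k.+1 (transfer_ratio k.+1) _ _ _ s1 s2.
Qed.

Lemma lead_coef_first_kind k :
  lead_coef (first_kind k).2 = \prod_(1 <= j < k.+1) (a j%:Z)^-1.
Proof.
elim: k => [|k IH]; first by rewrite lead_coef1 big_geq.
have [s1 s2] := size_first_kind k.
rewrite /first_kind jacobi_pairS -/(first_kind k) /=.
have [_ ->] := size_lead_transfer_step k.+1 (transfer_ratio k.+1) _ _ _ s1 s2.
by rewrite IH [RHS]big_nat_recr //= mulrC.
Qed.

Lemma size_second_kind k :
  (size (second_kind k.+1).1 <= k)%N /\ (size (second_kind k.+1).2 <= k.+1)%N.
Proof.
elim: k => [|k [s1 s2]].
  rewrite /= mulr0 add0r size_polyN size_poly0.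
  by rewrite (leq_trans (size_scale_leq _ _)) ?size_poly1.
rewrite /second_kind jacobi_pairS -/(second_kind k.+1) /=; split => //.
rewrite (leq_trans (size_polyD _ _)) // geq_max size_polyN.
rewrite (leq_trans (size_polyMleq _ _)) ?size_transfer_lin //=.
by rewrite (leq_trans (size_scale_leq _ _)) // (leq_trans s1) // ltnW.
Qed.

Lemma size_lead_coef_disc_poly p : (0 < p)%N ->
  size (disc_poly p) = p.+1 /\
  lead_coef (disc_poly p) = \prod_(1 <= j < p.+1) (a j%:Z)^-1.
Proof.
case: p => // k _; have [_ s1] := size_first_kind k.+1.
have [s2 _] := size_second_kind k.
have small : (size (second_kind k.+1).1 < size (first_kind k.+1).2)%N.
  by rewrite s1 ltnS (leq_trans s2).
by rewrite /disc_poly (size_polyDl small) (lead_coefDl small) s1 lead_coef_first_kind.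
Qed.
End DiscriminantPolynomial.

Lemma bigmin_nat_le {R : realDomainType} (x0 : R) (F : nat -> R) {m n i : nat} :
  (m <= i < n)%N -> \big[Num.min/x0]_(m <= j < n) F j <= F i.
Proof.
move=> /andP[mi i_n]; apply: le_trans (le_bigmin_nat _ F mi i_n) _.
by rewrite big_nat1_id ge_min lexx.
Qed.

Section Bands.
Context {R : realType} {a b : int -> R} {p : nat} {lmin lmax : nat -> R}.
Hypothesis edges : band_edges a b p lmin lmax.
Local Notation disc := (discriminant a b p).
Local Notation gap := (min_gap p lmin lmax).

Lemma lmax_add_min_gap n : (1 <= n < p)%N -> lmax n + gap <= lmin n.+1.
Proof.
move=> n_gap.
have := bigmin_nat_le (gap_len lmin lmax 1) (gap_len lmin lmax) n_gap.
by rewrite /min_gap /gap_len; lra.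
Qed.

Lemma band_sep m m' : (1 <= m)%N -> (m < m' <= p)%N -> lmax m + gap <= lmin m'.
Proof.
case: edges => lt_band le_gap _ _ _ m1.
elim: m' => // m' IH /andP[mm' m'p]; rewrite ltnS leq_eqVlt in mm'.
case/orP: mm' => [/eqP em|mm']; first by rewrite -em; apply: lmax_add_min_gap; lia.
have := IH ltac:(lia); have := lt_band m' ltac:(lia); have := le_gap m' ltac:(lia).
lra.
Qed.

Lemma band_edge_levels n : (1 <= n <= p)%N -> exists e f,
  [/\ disc e = -2, disc f = 2, lmin n <= e <= lmax n, lmin n <= f <= lmax n
    & `|e - f| = band_len lmin lmax n].
Proof.
case: edges => lt_band _ spec mono onto n_band.
have lt_n := lt_band n n_band.
have level_ends x : x = lmin n \/ x = lmax n -> -2 <= disc x <= 2.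
  move=> x_end; rewrite -ler_norml; apply/spec; exists n => //.
  by case: x_end => ->; rewrite lexx ltW.
have [/andP[lo1 lo2] /andP[hi1 hi2]] := (level_ends _ (or_introl erefl),
                                          level_ends _ (or_intror erefl)).
have [xm /andP[xm1 xm2] dxm] := onto n n_band (-2) ltac:(lra).
have [xp /andP[xp1 xp2] dxp] := onto n n_band 2 ltac:(lra).
have band_lo : lmin n <= lmin n <= lmax n by rewrite lexx ltW.
have band_hi : lmin n <= lmax n <= lmax n by rewrite lexx ltW.
case: (mono n n_band) => mon.
- have := mon _ _ (lexx _) xm1 xm2; have := mon _ _ xp1 xp2 (lexx _).
  rewrite dxm dxp => d_hi d_lo; exists (lmin n), (lmax n).
  by split => //; [lra | lra | rewrite distrC ger0_norm /band_len //; lra].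
- have := mon _ _ (lexx _) xp1 xp2; have := mon _ _ xm1 xm2 (lexx _).
  rewrite dxm dxp => d_hi d_lo; exists (lmax n), (lmin n).
  by split => //; [lra | lra | rewrite ger0_norm /band_len //; lra].
Qed.

Hypothesis p_pos : (0 < p)%N.
Hypothesis gap_pos : 0 < gap.

Lemma sorted_level_points f : lmin 1 <= f <= lmax 1 -> disc f = 2 ->
  exists rs : seq R, [/\ size rs = p.-1, sorted <%R (f :: rs),
    all (fun x => disc x == 2) rs & {in rs, forall x, lmax 1 + gap <= x}].
Proof.
case: edges => _ _ _ _ onto f_band df.
have pick m : exists x, (1 <= m <= p)%N -> lmin m <= x <= lmax m /\ disc x = 2.
  case: (boolP (1 <= m <= p)%N) => m_band; last by exists 0.
  by have [x x_band dx] := onto m m_band 2 ltac:(lra); exists x.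
have [r rP] := choice pick; pose rr m := if m == 1%N then f else r m.
have rrP m : (1 <= m <= p)%N -> lmin m <= rr m <= lmax m /\ disc (rr m) = 2.
  by rewrite /rr; case: eqP => [->|_]; [split | exact: rP].
have rr_lt m m' : (1 <= m)%N -> (m < m' <= p)%N -> rr m + gap <= rr m'.
  move=> m1 mm'; have := band_sep _ _ m1 mm'.
  by have := rrP m ltac:(lia); have := rrP m' ltac:(lia); lra.
exists (map rr (iota 2 p.-1)); split.
- by rewrite size_map size_iota.
- have -> : f :: map rr (iota 2 p.-1) = map rr (iota 1 p) by case: (p) p_pos.
  apply: (@homo_sorted_in _ _ [pred m | 1 <= m <= p]%N); last exact: iota_ltn_sorted.
    move=> m m' /[!inE] m_band m'_band /= mm'.
    by have := rr_lt m m' ltac:(lia) ltac:(lia); have := gap_pos; lra.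
  by apply/allP => m; rewrite mem_iota inE; lia.
- apply/allP => x /mapP[m]; rewrite mem_iota => m_range ->.
  by rewrite (rrP m _).2 //; lia.
- move=> x /mapP[m]; rewrite mem_iota => m_range ->.
  by have := band_sep 1 m isT ltac:(lia); have := rrP m ltac:(lia); lra.
Qed.

Hypothesis a_pos : forall n : int, 0 < a n.

Lemma first_band_bound :
  band_len lmin lmax 1 * gap ^+ p.-1 <= 4 * \prod_(1 <= n < p.+1) a n%:Z.
Proof.
have [e [f [de df /andP[_ e_le] f_band ef]]] := band_edge_levels 1 ltac:(lia).
have [rs [size_rs sorted_rs level_rs above_rs]] := sorted_level_points _ f_band df.
have P_pos : 0 < \prod_(1 <= n < p.+1) a n%:Z by apply: prodr_gt0 => n _.
have a_neq0 n : a n != 0 by rewrite gt_eqF.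
have [size_D lead_D] := size_lead_coef_disc_poly a b a_neq0 _ p_pos.
pose q := disc_poly a b p - 2%:P.
have small : (size (- 2%:P : {poly R}) < size (disc_poly a b p))%N.
  by rewrite size_polyN size_D (leq_ltn_trans (size_polyC_leq1 _)).
have size_q : size q = (size rs).+2.
  by rewrite size_polyDl // size_D size_rs; case: (p) p_pos.
have lead_q : lead_coef q = (\prod_(1 <= n < p.+1) a n%:Z)^-1.
  by rewrite lead_coefDl // lead_D prodfV.
have roots : all (root q) (f :: rs).
  apply/allP => x x_level.
  rewrite /root /q hornerD hornerN hornerC -discriminantE subr_eq0.
  by move: x_level; rewrite inE => /predU1P[->|/(allP level_rs)/eqP ->]; rewrite ?df.
have far x : x \in rs -> gap <= `|e - x|.
  by move/above_rs => x_above; rewrite distrC ger0_norm; have := gap_pos; lra.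
have := lead_coef_root_prod_le q f e gap rs size_q roots
  (lt_sorted_uniq sorted_rs) (ltW gap_pos) far.
rewrite lead_q ef size_rs /q hornerD hornerN hornerC -discriminantE de.
have four : `|-2 - 2| = 4 :> R by rewrite ltr0_norm; lra.
by rewrite normfV (gtr0_norm P_pos) -mulrA ler_pdivrMl // four (mulrC 4).
Qed.
End Bands.

Theorem corollary1p4 (R : realType) (p : nat) (a b : int -> R)
    (lmin lmax : nat -> R) :
  (2 <= p)%N ->
  (forall n : int, 0 < a n) ->
  (forall n : int, a (n + p%:Z) = a n) ->
  (forall n : int, b (n + p%:Z) = b n) ->
  band_edges a b p lmin lmax ->
  Num.max (max_band p lmin lmax) (4 * geom_mean a p) <= 4 * min_gap p lmin lmax ->
  min_band p lmin lmax <=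
    4 * geom_mean a p ^+ p / min_gap p lmin lmax ^+ p.-1.
Proof.
move=> p2 a_pos _ _ edges; rewrite ge_max => /andP[_ mean_le_gap].
have P_pos : 0 < \prod_(1 <= n < p.+1) a n%:Z by apply: prodr_gt0 => n _.
have mean_pos : 0 < geom_mean a p by apply: powR_gt0.
have gap_pos : 0 < min_gap p lmin lmax by lra.
have -> : geom_mean a p ^+ p = \prod_(1 <= n < p.+1) a n%:Z.
  rewrite -powR_mulrn ?ltW // -powRrM mulVf ?powRr1 ?ltW //.
  by rewrite pnatr_eq0; lia.
rewrite ler_pdivlMr ?exprn_gt0 //.
have min_le_first : min_band p lmin lmax <= band_len lmin lmax 1.
  by apply: bigmin_nat_le; lia.
apply: le_trans _ (first_band_bound edges _ gap_pos a_pos); last by lia.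
by rewrite ler_wpM2r // exprn_ge0 // ltW.
Qed.
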